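(* Let $G$ be a coloured graph with vertex set $V(G)=V(K_{\mathbb N})$ whose edge set is the (finite) set of edges coloured during the first $t\ge 0$ rounds of a game on $K_{\mathbb N}$ in which Builder selects edges and Painter colours them red or blue. Suppose $G$ is red-bipartite and $e$ is an edge of $K_{\mathbb N}$ not in $E(G)$ (selected by Builder in round $t+1$). Then $e$ can be coloured red or blue so that the resulting coloured graph $G'=G+e$ is red-bipartite and $f(G')\le f(G)+\varphi+1$.
   Context: $\varphi=(1+\sqrt5)/2$ is the golden ratio. A coloured graph is one in which every edge is red or blue. For $V'\subseteq V(G)$, $E[V']$ denotes the set of edges of $G$ with both ends in $V'$ ($E[\emptyset]=\emptyset$). A coloured graph $G$ is red-bipartite if there is a partition $V(G)=V_1\cup V_2$ (one part may be empty) such that no blue edge joins $V_1$ to $V_2$ and no red edge lies in $E[V_1]\cup E[V_2]$; such $(V_1,V_2)$ is a red-bipartition (equivalently, $G$ has no cycle with an odd number of red edges; each component has a red-bipartition unique up to swapping the parts). The potential $f$ is defined on coloured red-bipartite graphs with finitely many nontrivial components: if $G$ is an isolated vertex, $f(G)=0$; if $G$ is connected with at least two vertices and red-bipartition $(V_1,V_2)$, put $p_G(V_i)=\varphi|V_i|+|E[V_i]|$ for $i=1,2$, $a(G)=\max(p_G(V_1),p_G(V_2))$, $b(G)=\min(p_G(V_1),p_G(V_2))$, and $f(G)=\varphi a(G)-\varphi+\max(a(G)-\varphi^3,\,b(G))$; if $G$ has components $G_1,\dots,G_s$ (isolated vertices contributing $0$), then $f(G)=\sum_i f(G_i)$. 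*)

From HB Require Import structures.
From mathcomp Require Import all_boot all_order all_algebra.
From mathcomp Require Import finmap.
From mathcomp Require Import reals.
From Stdlib Require Import Relation_Operators ClassicalEpsilon.

Set Implicit Arguments.
Unset Strict Implicit.
Unset Printing Implicit Defensive.

Import Order.TTheory GRing.Theory Num.Theory.
Local Open Scope fset_scope.
Local Open Scope ring_scope.

(* A coloured graph on the vertex set nat = V(K_N) with finitely many edges.
   Edges are stored as ordered pairs (u, v) with u < v (see [cg_wf]);
   the colour of an edge x is [cg_col x] (true = red, false = blue). *)
Record cgraph := CGraph {
  cg_edges : {fset (nat * nat)};
  cg_col : nat * nat -> bool
}.

Definition red := true.
Definition blue := false.

(* well-formedness: every stored edge (u,v) has u < v (no loops, each
   unordered edge has a unique representative) *)
Definition cg_wf (G : cgraph) : Prop :=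
  forall x, x \in cg_edges G -> (x.1 < x.2)%N.

Definition add_edge (G : cgraph) (e : nat * nat) (c : bool) : cgraph :=
  CGraph (e |` cg_edges G) (fun x => if x == e then c else cg_col G x).

Definition red_bipartition (G : cgraph) (V1 : nat -> bool) : Prop :=
  forall x, x \in cg_edges G ->
    (cg_col G x = red -> V1 x.1 != V1 x.2) /\
    (cg_col G x = blue -> V1 x.1 = V1 x.2).

Definition red_bipartite (G : cgraph) : Prop :=
  exists V1 : nat -> bool, red_bipartition G V1.

Definition edges_in (G : cgraph) (V' : {fset nat}) : {fset (nat * nat)} :=
  [fset x in cg_edges G | (x.1 \in V') && (x.2 \in V')].

Definition adj (G : cgraph) (u v : nat) : Prop :=
  ((u, v) \in cg_edges G) \/ ((v, u) \in cg_edges G).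

Definition connected_in (G : cgraph) (u v : nat) : Prop :=
  clos_refl_trans nat (adj G) u v.

Definition bool_of (P : Prop) : bool :=
  if excluded_middle_informative P then true else false.

(* vertices incident to at least one edge (the vertices of the nontrivial
   components); all other vertices of K_N are isolated. *)
Definition support (G : cgraph) : {fset nat} :=
  [fset x.1 | x in cg_edges G] `|` [fset x.2 | x in cg_edges G].

Definition comp (G : cgraph) (v : nat) : {fset nat} :=
  [fset u in support G | bool_of (connected_in G u v)].

Definition comps (G : cgraph) : {fset {fset nat}} :=
  [fset comp G v | v in support G].

Definition comp_rbpart (G : cgraph) (C V1 : {fset nat}) : Prop :=
  V1 `<=` C /\
  forall x, x \in cg_edges G -> x.1 \in C ->
    (cg_col G x = red -> (x.1 \in V1) != (x.2 \in V1)) /\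
    (cg_col G x = blue -> (x.1 \in V1) = (x.2 \in V1)).

(* a chosen red-bipartition side of the component C (unique up to swap
   when G is red-bipartite) *)
Definition side1 (G : cgraph) (C : {fset nat}) : {fset nat} :=
  epsilon (inhabits fset0) (comp_rbpart G C).

Definition side2 (G : cgraph) (C : {fset nat}) : {fset nat} :=
  C `\` side1 G C.

Section Potential.
Variable R : realType.

Definition phi : R := (1 + Num.sqrt 5) / 2.

Definition pot (G : cgraph) (V' : {fset nat}) : R :=
  phi * (#|` V'|)%:R + (#|` edges_in G V'|)%:R.

Definition a_comp (G : cgraph) (C : {fset nat}) : R :=
  Num.max (pot G (side1 G C)) (pot G (side2 G C)).

Definition b_comp (G : cgraph) (C : {fset nat}) : R :=
  Num.min (pot G (side1 G C)) (pot G (side2 G C)).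

Definition f_comp (G : cgraph) (C : {fset nat}) : R :=
  phi * a_comp G C - phi + Num.max (a_comp G C - phi ^+ 3) (b_comp G C).

(* f(G): sum over nontrivial components; isolated vertices contribute 0 *)
Definition f (G : cgraph) : R :=
  \sum_(C <- comps G) f_comp G C.

End Potential.

From Pilot Require Import Defs.
From HB Require Import structures.
From mathcomp Require Import all_boot all_order all_algebra.
From mathcomp Require Import finmap.
From mathcomp Require Import reals.
From mathcomp Require Import ring lra.
From Stdlib Require Import Relation_Operators ClassicalEpsilon.

(* A component whose sides have potentials a >= b contributes
   phi a - phi + max (a - phi^3, b) to f; since phi^3 = 2 phi + 1 this is the
   maximum of four linear forms in (a, b), so once phi^2 = phi + 1 is known
   every estimate is linear arithmetic after case splits.
   If u and v lie in one component, colour uv consistently with a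
   red-bipartition: each side potential grows by at most 1, so f grows by at
   most phi + 1.  Otherwise uv joins two components with side potentials (p, q)
   and (r, s) (an isolated vertex has sides phi and 0 but contributes 0).
   Colouring uv blue yields sides (p + r + 1, q + s); colouring it red and
   flipping the component of v yields (p + s, q + r); one of the two choices
   costs at most phi + 1. *)

Set Implicit Arguments.
Unset Strict Implicit.
Unset Printing Implicit Defensive.
Import Order.TTheory GRing.Theory Num.Theory.
Local Open Scope fset_scope.
Local Open Scope ring_scope.

Lemma bool_ofP (P : Prop) : reflect P (bool_of P).
Proof. by rewrite /bool_of; case: excluded_middle_informative => h; constructor. Qed.

(* [comp G w] is itself a filtered set, so rewriting with [in_fset_filter]
   without giving [A] may unfold it instead of the intended filter. *)
Lemma in_fset_filter (T : choiceType) (A : {fset T}) (P : pred T) z :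
  (z \in [fset y in A | P y]) = (z \in A) && P z.
Proof. by rewrite inE. Qed.

Lemma eq_fset_filter (T : choiceType) (A : {fset T}) (P Q : pred T) :
  {in A, P =1 Q} -> [fset z in A | P z] = [fset z in A | Q z].
Proof.
move=> hPQ; apply/fsetP => z; rewrite !in_fset_filter.
by case: (boolP (z \in A)) => // /hPQ ->.
Qed.

Section Connectivity.
Variable G : cgraph.

Lemma connected_in_refl a : connected_in G a a.
Proof. exact: rt_refl. Qed.

Lemma connected_in_trans a b d :
  connected_in G a b -> connected_in G b d -> connected_in G a d.
Proof. exact: rt_trans. Qed.

Lemma connected_in_sym a b : connected_in G a b -> connected_in G b a.
Proof.
elim=> [x y [h|h]|x|x y z _ h1 _ h2]; last exact: connected_in_trans h2 h1.
- by apply: rt_step; right.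
- by apply: rt_step; left.
- exact: connected_in_refl.
Qed.

Lemma edge_connected x : x \in cg_edges G -> connected_in G x.1 x.2.
Proof. by move=> hx; apply: rt_step; left; rewrite -surjective_pairing. Qed.

Lemma connected_in_edge x w : x \in cg_edges G ->
  connected_in G x.1 w <-> connected_in G x.2 w.
Proof.
move=> /edge_connected hx; split; first exact: connected_in_trans (connected_in_sym hx).
exact: connected_in_trans hx.
Qed.

Lemma edge_support1 x : x \in cg_edges G -> x.1 \in Defs.support G.
Proof. by move=> hx; rewrite in_fsetU; apply/orP; left; apply/imfsetP; exists x. Qed.

Lemma edge_support2 x : x \in cg_edges G -> x.2 \in Defs.support G.
Proof. by move=> hx; rewrite in_fsetU; apply/orP; right; apply/imfsetP; exists x. Qed.

Lemma connected_in_support a b :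
  connected_in G a b -> a = b \/ a \in Defs.support G.
Proof.
elim=> [x y [h|h]|x|x y z _ [->|hx] _ h2] //.
- by right; exact: (edge_support1 h).
- by right; exact: (edge_support2 h).
- by left.
- by right.
Qed.

Lemma mem_comp w z :
  reflect (z \in Defs.support G /\ connected_in G z w) (z \in Defs.comp G w).
Proof.
rewrite in_fset_filter; apply: (iffP andP) => -[h1 h2]; split=> //; exact/bool_ofP.
Qed.

Lemma mem_comp_self w : w \in Defs.support G -> w \in Defs.comp G w.
Proof. by move=> hw; apply/mem_comp; split=> //; exact: connected_in_refl. Qed.

Lemma comp_connected a b : connected_in G a b -> Defs.comp G a = Defs.comp G b.
Proof.
move=> hab; apply/fsetP => z; apply/mem_comp/mem_comp => -[hz hc]; split=> //.
  exact: connected_in_trans hc hab.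
exact: connected_in_trans hc (connected_in_sym hab).
Qed.

Lemma compsP C :
  reflect (exists2 w, w \in Defs.support G & C = Defs.comp G w) (C \in Defs.comps G).
Proof.
by apply: (iffP idP) => [/imfsetP[w hw ->]|[w hw ->]]; [exists w|apply/imfsetP; exists w].
Qed.

Lemma comp_edge w x : x \in cg_edges G ->
  (x.1 \in Defs.comp G w) = (x.2 \in Defs.comp G w).
Proof.
move=> hx; apply/mem_comp/mem_comp => -[_ h]; split.
- exact: edge_support2 hx.
- exact/(connected_in_edge _ hx).
- exact: edge_support1 hx.
- exact/(connected_in_edge _ hx).
Qed.

Lemma bool_of_connected_edge w x : x \in cg_edges G ->
  bool_of (connected_in G x.1 w) = bool_of (connected_in G x.2 w).
Proof. by move=> hx; apply/bool_ofP/bool_ofP => /(connected_in_edge w hx). Qed.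

End Connectivity.

Lemma red_edgeP (a b col : bool) :
  (col = red -> a != b) /\ (col = blue -> a = b) <-> a (+) b = col.
Proof.
rewrite /red /blue; case: col a b => [] [] []; split=> //; case=> h1 h2.
all: by [have := h1 erefl | have := h2 erefl].
Qed.

Lemma red_bipartitionP G W : red_bipartition G W <->
  forall x, x \in cg_edges G -> W x.1 (+) W x.2 = cg_col G x.
Proof. by split=> h x /h /red_edgeP. Qed.

Lemma comp_rbpartP G C V : comp_rbpart G C V <-> V `<=` C /\
  forall x, x \in cg_edges G -> x.1 \in C -> (x.1 \in V) (+) (x.2 \in V) = cg_col G x.
Proof. by split=> -[sVC h]; split=> // x hx /(h x hx) /red_edgeP. Qed.

Lemma red_bipartition_agree G W1 W2 a b :
  red_bipartition G W1 -> red_bipartition G W2 -> connected_in G a b ->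
  W1 a (+) W2 a = W1 b (+) W2 b.
Proof.
move=> /red_bipartitionP h1 /red_bipartitionP h2.
elim=> [x y [hxy|hxy]|//|x y z _ -> _ -> //];
  move: (h1 _ hxy) (h2 _ hxy) => /= <-;
  by case: (W1 x); case: (W1 y); case: (W2 x); case: (W2 y).
Qed.

Lemma red_bipartition_flip G W (P : nat -> bool) : red_bipartition G W ->
  (forall x, x \in cg_edges G -> P x.1 = P x.2) ->
  red_bipartition G (fun z => W z (+) P z).
Proof.
move=> /red_bipartitionP hW hP; apply/red_bipartitionP => x hx.
by rewrite -(hW x hx) (hP x hx); case: (W x.1); case: (W x.2); case: (P x.2).
Qed.

Lemma red_bipartition_add_edge G e c W : e \notin cg_edges G ->
  red_bipartition (add_edge G e c) W <-> red_bipartition G W /\ W e.1 (+) W e.2 = c.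
Proof.
move=> he; rewrite !red_bipartitionP /=; split=> [h|[h hc] x].
- split; last by move: (h e); rewrite in_fset1U eqxx => /(_ isT).
  move=> x hx; move: (h x); rewrite in_fset1U hx orbT => /(_ isT).
  by case: eqP => // ex; move: he; rewrite -ex hx.
- by rewrite in_fset1U; case: eqP => [-> _|_ /= hx] //; exact: h.
Qed.

Lemma in_edges_in G V x :
  (x \in edges_in G V) = [&& x \in cg_edges G, x.1 \in V & x.2 \in V].
Proof. by rewrite inE. Qed.

Section Potential.
Variables (R : realType) (G : cgraph).

Lemma pot0 : pot R G fset0 = 0.
Proof.
rewrite /pot; have -> : edges_in G fset0 = fset0.
  by apply/fsetP => x; rewrite in_edges_in in_fset0 andbF.
by rewrite !cardfs0 mulr0 addr0.
Qed.

Lemma pot_fset1 u : cg_wf G -> pot R G [fset u] = phi R.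
Proof.
move=> wf; rewrite /pot; have -> : edges_in G [fset u] = fset0.
  apply/fsetP => x; rewrite in_edges_in in_fset0 !in_fset1.
  apply/and3P => -[/wf + /eqP e1 /eqP e2]; by rewrite e1 e2 ltnn.
by rewrite cardfs1 cardfs0 mulr1 addr0.
Qed.

Lemma pot_fsetU A B :
  (forall a b, a \in A -> b \in B -> ~ connected_in G a b) ->
  pot R G (A `|` B) = pot R G A + pot R G B.
Proof.
move=> hAB.
have disj z : z \in A -> z \notin B.
  by move=> zA; apply/negP => zB; exact: hAB zA zB (connected_in_refl _ _).
have cardU (X Y : {fset _}) : (forall z, z \in X -> z \notin Y) ->
    #|` X `|` Y| = (#|` X| + #|` Y|)%N.
  move=> hXY; rewrite -cardfsUI; suff -> : X `&` Y = fset0 by rewrite cardfs0 addn0.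
  by apply/fsetP => z; rewrite in_fsetI in_fset0; apply/negP => /andP[/hXY/negP].
have eU : edges_in G (A `|` B) = edges_in G A `|` edges_in G B.
  apply/fsetP => x; rewrite in_fsetU !in_edges_in !in_fsetU.
  case hx: (x \in cg_edges G) => //=; have cx := edge_connected hx.
  case a1: (x.1 \in A); case a2: (x.2 \in A); case b1: (x.1 \in B);
    case b2: (x.2 \in B) => //=; exfalso;
    first [exact: hAB _ _ a1 b2 cx | exact: hAB _ _ a2 b1 (connected_in_sym cx)].
rewrite /pot eU cardU // cardU; first by rewrite !natrD; ring.
move=> x; rewrite !in_edges_in => /and3P[_ a1 _]; apply/negP => /and3P[_ b1 _].
by move: (disj _ a1); rewrite b1.
Qed.

Lemma pot_add_edge e c X : e \notin cg_edges G ->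
  pot R (add_edge G e c) X = pot R G X + ((e.1 \in X) && (e.2 \in X))%:R.
Proof.
move=> he; rewrite /pot -addrA -natrD; congr (_ + _%:R).
case hX: ((e.1 \in X) && (e.2 \in X)).
- have -> : edges_in (add_edge G e c) X = e |` edges_in G X.
    apply/fsetP => x; rewrite in_fset1U !in_edges_in /= in_fset1U.
    by case: eqP => [->|]; rewrite ?hX.
  by rewrite cardfsU1 in_edges_in (negbTE he) addnC.
- have -> : edges_in (add_edge G e c) X = edges_in G X.
    apply/fsetP => x; rewrite !in_edges_in /= in_fset1U.
    by case: eqP => [->|]; rewrite ?hX ?andbF.
  by rewrite addn0.
Qed.

End Potential.

Section Fsides.
Variable R : realType.
Implicit Types a b p q r s : R.

Definition fsides a b : R :=
  phi R * Num.max a b - phi R + Num.max (Num.max a b - phi R ^+ 3) (Num.min a b).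

Lemma fsidesC a b : fsides a b = fsides b a.
Proof. by rewrite /fsides maxC minC. Qed.

Lemma phi_sqr : phi R * phi R = phi R + 1.
Proof.
have s0 : 0 <= Num.sqrt 5 :> R by rewrite sqrtr_ge0.
have s2 : Num.sqrt 5 * Num.sqrt 5 = 5 :> R by rewrite -expr2 sqr_sqrtr // ler0n.
rewrite /phi; nra.
Qed.

Lemma phi_bounds : 8 < 5 * phi R /\ 10 * phi R < 17.
Proof.
have phi0 : 0 <= phi R by rewrite divr_ge0 ?addr_ge0 ?sqrtr_ge0.
by have := phi_sqr; split; nra.
Qed.

Lemma fsides_max4 a b : fsides a b =
  Num.max (Num.max (phi R * a + a - 3 * phi R - 1) (phi R * b + b - 3 * phi R - 1))
          (Num.max (phi R * a + b - phi R) (phi R * b + a - phi R)).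
Proof.
have phi2 := phi_sqr; have [phi_lb phi_ub] := phi_bounds.
wlog hab : a b / a <= b.
  move=> hw; case: (leP a b) => [|/ltW] h; first exact: hw.
  by rewrite fsidesC hw // [X in Num.max X _]maxC [X in Num.max _ X]maxC.
rewrite /fsides.
have -> : phi R ^+ 3 = 2 * phi R + 1 by rewrite !exprS expr0 mulr1 phi2; nra.
rewrite (max_idPr hab) (min_idPl hab).
have -> : Num.max (phi R * a + a - 3 * phi R - 1) (phi R * b + b - 3 * phi R - 1) =
          phi R * b + b - 3 * phi R - 1 by apply/max_idPr; nra.
have -> : Num.max (phi R * a + b - phi R) (phi R * b + a - phi R) = phi R * b + a - phi R.
  by apply/max_idPr; nra.
by rewrite !maxEle; do 2 case: leP => ?; lra.
Qed.

Lemma fsides_ge a b :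
  [/\ phi R * a + a - 3 * phi R - 1 <= fsides a b, phi R * b + b - 3 * phi R - 1 <= fsides a b,
      phi R * a + b - phi R <= fsides a b & phi R * b + a - phi R <= fsides a b].
Proof. by rewrite fsides_max4 !le_max !lexx !orbT. Qed.

Lemma fsides_shift_le p q a b : 0 <= a <= 1 -> 0 <= b <= 1 ->
  fsides (p + a) (q + b) <= fsides p q + phi R + 1.
Proof.
move=> /andP[a0 a1] /andP[b0 b1].
have [phi_lb phi_ub] := phi_bounds; have [g1 g2 g3 g4] := fsides_ge p q.
move: (fsides p q) g1 g2 g3 g4 => F g1 g2 g3 g4.
by rewrite fsides_max4 !ge_max; apply/andP; split; apply/andP; split; nra.
Qed.

Lemma fsides_merge_le p q r s :
  fsides (p + r + 1) (q + s) <= fsides p q + fsides r s + phi R + 1 \/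
  fsides (p + s) (q + r) <= fsides p q + fsides r s + phi R + 1.
Proof.
have [phi_lb phi_ub] := phi_bounds.
have [f1 f2 f3 f4] := fsides_ge p q; have [g1 g2 g3 g4] := fsides_ge r s.
rewrite (fsides_max4 (p + r + 1)) (fsides_max4 (p + s)).
move: (fsides p q) (fsides r s) f1 f2 f3 f4 g1 g2 g3 g4 => F G f1 f2 f3 f4 g1 g2 g3 g4.
case: leP => [|hb]; [by left|right]; move: hb; rewrite !lt_max !ge_max.
by case/orP => /orP[] hb; apply/andP; split; apply/andP; split; nra.
Qed.

Lemma fsides_merge_isolated_le r s :
  fsides (phi R + r + 1) s <= fsides r s + phi R + 1 \/
  fsides (phi R + s) r <= fsides r s + phi R + 1.
Proof.
have phi2 := phi_sqr; have [phi_lb phi_ub] := phi_bounds.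
have [g1 g2 g3 g4] := fsides_ge r s.
rewrite (fsides_max4 (phi R + r + 1)) (fsides_max4 (phi R + s)).
move: (fsides r s) g1 g2 g3 g4 => G g1 g2 g3 g4.
case: leP => [|hb]; [by left|right]; move: hb; rewrite !lt_max !ge_max.
by case/orP => /orP[] hb; apply/andP; split; apply/andP; split; nra.
Qed.

Lemma fsides_phi_phi : fsides (phi R) (phi R) = phi R + 1.
Proof.
have := phi_sqr; have [phi_lb phi_ub] := phi_bounds.
by rewrite fsides_max4 !maxxx maxEle; case: leP; lra.
Qed.

Lemma fsides_merge_choice p q r s (bu bv : bool) :
  (~~ bu -> p = phi R /\ q = 0) -> (~~ bv -> r = phi R /\ s = 0) ->
  let F := (if bu then fsides p q else 0) + (if bv then fsides r s else 0) + phi R + 1 in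
  fsides (p + r + 1) (q + s) <= F \/ fsides (p + s) (q + r) <= F.
Proof.
case: bu => [_|/(_ isT) [-> ->]]; case: bv => [_|/(_ isT) [-> ->]] /=.
- exact: fsides_merge_le.
- rewrite !addr0 (addrC p) (addrC q) (fsidesC p (phi R + q)).
  exact: fsides_merge_isolated_le.
- by rewrite !add0r; apply: fsides_merge_isolated_le.
- by right; rewrite !add0r addr0 fsides_phi_phi.
Qed.

End Fsides.

Lemma side1_comp G W w : red_bipartition G W -> w \in Defs.support G ->
  side1 G (Defs.comp G w) = [fset z in Defs.comp G w | W z] \/
  side1 G (Defs.comp G w) = [fset z in Defs.comp G w | ~~ W z].
Proof.
move=> hW hw; have /red_bipartitionP hWe := hW; set C := Defs.comp G w.
have hC : comp_rbpart G C [fset z in C | W z].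
  apply/comp_rbpartP; split=> [|x hx x1C].
    by apply/fsubsetP => z; rewrite in_fset_filter => /andP[].
  rewrite !(in_fset_filter C) x1C -(comp_edge w hx) x1C; exact: hWe.
have /comp_rbpartP [sC hs] : comp_rbpart G C (side1 G C).
  exact: epsilon_spec (ex_intro _ _ hC).
(* [side1] on C and W elsewhere: a red-bipartition, as no edge leaves C. *)
pose W' z := if z \in C then z \in side1 G C else W z.
have hW' : red_bipartition G W'.
  apply/red_bipartitionP => x hx; rewrite /W' -(comp_edge w hx).
  by case x1C: (x.1 \in C); [exact: hs|exact: hWe].
have agree z : z \in C -> (z \in side1 G C) (+) W z = (w \in side1 G C) (+) W w.
  move=> zC; have [_ zw] := mem_comp _ _ _ zC.
  by have := red_bipartition_agree hW' hW zw; rewrite /W' zC (mem_comp_self hw).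
have notC z : z \notin C -> z \notin side1 G C.
  by apply: contra => /(fsubsetP sC).
case hk: ((w \in side1 G C) (+) W w); [right|left]; apply/fsetP => z;
  rewrite (in_fset_filter C); case zC: (z \in C) => /=; try exact/negbTE/notC/negbT.
all: by have := agree z zC; rewrite hk; case: (z \in side1 G C); case: (W z).
Qed.

Lemma f_comp_bipartition (R : realType) G W w :
  red_bipartition G W -> w \in Defs.support G ->
  f_comp R G (Defs.comp G w) =
  fsides (pot R G [fset z in Defs.comp G w | W z]) (pot R G [fset z in Defs.comp G w | ~~ W z]).
Proof.
move=> hW hw; set C := Defs.comp G w.
have compl (P Q : pred nat) : (forall z, Q z = ~~ P z) ->
    C `\` [fset z in C | P z] = [fset z in C | Q z].
  move=> hQ; apply/fsetP => z; rewrite in_fsetD !(in_fset_filter C) hQ.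
  by case: (z \in C); case: (P z).
rewrite [LHS]/f_comp -/(fsides _ _) /side2; case: (side1_comp hW hw) => ->.
- by rewrite (compl W (fun z => ~~ W z)).
- by rewrite (compl (fun z => ~~ W z) W) 1?fsidesC // => z; rewrite negbK.
Qed.


(* [comp G t] is empty when t is isolated; [vcomp G t] is then [fset t]. *)
Definition vcomp (G : cgraph) (t : nat) : {fset nat} := t |` Defs.comp G t.

Definition touches (u v : nat) (C : {fset nat}) : bool := (u \in C) || (v \in C).

Definition f_at (R : realType) (G : cgraph) (t : nat) : R :=
  if t \in Defs.support G then f_comp R G (Defs.comp G t) else 0.

Definition f_away (R : realType) (G : cgraph) (u v : nat) : R :=
  \sum_(C <- [fset C in Defs.comps G | ~~ touches u v C]) f_comp R G C.

Section Components.
Variable G : cgraph.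

Lemma mem_vcompP t z : reflect (connected_in G z t) (z \in vcomp G t).
Proof.
rewrite in_fset1U; apply: (iffP orP) => [[/eqP ->|/mem_comp[] //]|hz].
  exact: connected_in_refl.
by case: (connected_in_support hz) => [->|zS]; [left|right; apply/mem_comp].
Qed.

Lemma vcomp_support t : t \in Defs.support G -> vcomp G t = Defs.comp G t.
Proof. by move=> /mem_comp_self ht; apply/fsetP => z; rewrite in_fset1U; case: eqP => // ->. Qed.

Lemma vcomp_isolated t : t \notin Defs.support G -> vcomp G t = [fset t].
Proof.
move=> ht; apply/fsetP => z; rewrite in_fset1U in_fset1; case: eqP => //= zt.
apply/negP => /mem_comp[zS /connected_in_sym /connected_in_support[/esym//|tS]].
by rewrite tS in ht.
Qed.

Lemma comp_notin_disconnected w t : w \in Defs.support G -> t \notin Defs.comp G w ->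
  ~ connected_in G w t.
Proof.
move=> wS /negP tC wt; apply: tC; case: (connected_in_support (connected_in_sym wt)) => [->|tS].
  exact: mem_comp_self.
by apply/mem_comp; split=> //; exact: connected_in_sym.
Qed.

Lemma comps_mem t : [fset C in Defs.comps G | t \in C] =
  if t \in Defs.support G then [fset Defs.comp G t] else fset0.
Proof.
apply/fsetP => C; rewrite in_fset_filter; apply/andP/idP.
- case=> /compsP[w _ ->] /mem_comp[tS tw].
  by rewrite tS in_fset1 (comp_connected tw).
- case: ifP => [tS|]; last by rewrite in_fset0.
  by rewrite in_fset1 => /eqP ->; split; [apply/compsP; exists t|exact: mem_comp_self].
Qed.

Lemma sum_comps_mem (R : realType) t :
  \sum_(C <- [fset C in Defs.comps G | t \in C]) f_comp R G C = f_at R G t.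
Proof. by rewrite comps_mem /f_at; case: ifP => _; rewrite ?big_seq_fset1 ?big_seq_fset0. Qed.

Lemma comps_touches u v : [fset C in Defs.comps G | touches u v C] =
  [fset C in Defs.comps G | u \in C] `|` [fset C in Defs.comps G | v \in C].
Proof. by apply/fsetP => C; rewrite in_fsetU !in_fset_filter -andb_orr. Qed.

Lemma f_touches_away (R : realType) u v : f R G =
  \sum_(C <- [fset C in Defs.comps G | touches u v C]) f_comp R G C + f_away R G u v.
Proof. exact: big_fsetID. Qed.

Lemma f_connected (R : realType) u v : u != v -> connected_in G u v ->
  f R G = f_comp R G (Defs.comp G u) + f_away R G u v.
Proof.
move=> neq huv; rewrite (f_touches_away R u v) comps_touches !comps_mem.
have [e|uS] := connected_in_support huv; first by rewrite e eqxx in neq.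
have [e|vS] := connected_in_support (connected_in_sym huv); first by rewrite e eqxx in neq.
by rewrite uS vS (comp_connected huv) fsetUid big_seq_fset1.
Qed.

Lemma f_disconnected (R : realType) u v : ~ connected_in G u v ->
  f R G = f_at R G u + f_at R G v + f_away R G u v.
Proof.
move=> nuv; rewrite (f_touches_away R u v) comps_touches -!sum_comps_mem.
rewrite (comps_mem u); case: ifP => uS; last by rewrite fset0U big_seq_fset0 add0r.
rewrite big_fsetU1 ?big_seq_fset1 // in_fset_filter negb_and orbC.
by apply/orP; left; apply/negP => /mem_comp[_ /connected_in_sym].
Qed.

Lemma f_at_bipartition (R : realType) W t : red_bipartition G W ->
  f_at R G t = if t \in Defs.support G then
    fsides (pot R G [fset z in vcomp G t | W z]) (pot R G [fset z in vcomp G t | ~~ W z])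
  else 0.
Proof.
by move=> hW; rewrite /f_at; case: ifP => // tS; rewrite vcomp_support // (f_comp_bipartition R hW).
Qed.

Lemma pot_vcomp_isolated (R : realType) (P : pred nat) t : cg_wf G ->
  t \notin Defs.support G -> pot R G [fset z in vcomp G t | P z] = if P t then phi R else 0.
Proof.
move=> wf tS; rewrite vcomp_isolated //; case: ifP => Pt.
- have -> : [fset z in [fset t] | P z] = [fset t].
    by apply/fsetP => z; rewrite in_fset_filter in_fset1; case: eqP => // ->.
  exact: pot_fset1.
- have -> : [fset z in [fset t] | P z] = fset0.
    by apply/fsetP => z; rewrite in_fset_filter in_fset1 in_fset0; case: eqP => // ->.
  exact: pot0.
Qed.

End Components.

Section AddEdge.
Variables (G : cgraph) (u v : nat) (c : bool).
Let G' := add_edge G (u, v) c.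
Let near z := connected_in G z u \/ connected_in G z v.

Lemma connected_add_edge a b : connected_in G a b -> connected_in G' a b.
Proof.
elim=> [x y h|x|x y z _ h1 _ h2]; last exact: connected_in_trans h1 h2.
- by apply: rt_step; case: h => h; [left|right]; rewrite /= in_fset1U h orbT.
- exact: connected_in_refl.
Qed.

Lemma connected_new_edge : connected_in G' u v.
Proof. by apply: rt_step; left; rewrite /= in_fset1U eqxx. Qed.

Lemma connected_add_edgeP a b :
  connected_in G' a b -> connected_in G a b \/ (near a /\ near b).
Proof.
have near_conn x y : connected_in G x y -> near y -> near x.
  by move=> hxy [h|h]; [left|right]; exact: connected_in_trans hxy h.
have uu : near u by left; exact: connected_in_refl.
have vv : near v by right; exact: connected_in_refl.
elim=> [x y [h|h]|x|x y z _ h1 _ h2].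
- move: h; rewrite /= in_fset1U => /orP[/eqP[-> ->]|h]; first by right.
  by left; apply: rt_step; left.
- move: h; rewrite /= in_fset1U => /orP[/eqP[-> ->]|h]; first by right.
  by left; apply: rt_step; right.
- by left; exact: connected_in_refl.
- case: h1 => [h1|[h1 h1']]; case: h2 => [h2|[h2 h2']].
  + by left; exact: connected_in_trans h1 h2.
  + by right; split=> //; exact: near_conn h1 h2.
  + by right; split=> //; exact: near_conn (connected_in_sym h2) h1'.
  + by right.
Qed.

Lemma support_add_edge z :
  (z \in Defs.support G') = [|| z \in Defs.support G, z == u | z == v].
Proof.
rewrite /Defs.support /= !imfsetU1 !in_fsetU !in_fset1.
by case: (z == u); case: (z == v); rewrite ?orbT ?orbF.
Qed.

Lemma comp_add_edge : Defs.comp G' u = vcomp G u `|` vcomp G v.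
Proof.
apply/fsetP => z; rewrite in_fsetU; apply/mem_comp/orP.
- case=> _ /connected_add_edgeP[zu|[[zu|zv] _]];
    by [left; apply/mem_vcompP|right; apply/mem_vcompP].
- have uS : u \in Defs.support G' by rewrite support_add_edge eqxx orbT.
  have vS : v \in Defs.support G' by rewrite support_add_edge eqxx !orbT.
  have zS t : connected_in G z t -> t \in Defs.support G' -> z \in Defs.support G'.
    by move=> /connected_in_support[-> //|zS _]; rewrite support_add_edge zS.
  case=> /mem_vcompP hz; split; first exact: zS hz uS.
  + exact: connected_add_edge.
  + exact: zS hz vS.
  + exact: connected_in_trans (connected_add_edge hz) (connected_in_sym connected_new_edge).
Qed.

Lemma comp_add_edge_away w : ~ connected_in G w u -> ~ connected_in G w v ->
  Defs.comp G' w = Defs.comp G w.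
Proof.
move=> nu nv; apply/fsetP => t; apply/mem_comp/mem_comp => -[tS tw].
- have {}tw : connected_in G t w.
    case: (connected_add_edgeP tw) => // -[_ [h|h]]; [by case: nu|by case: nv].
  split=> //; case: (connected_in_support tw) => [e|//].
  move: tS; rewrite e support_add_edge => /or3P[//|/eqP e'|/eqP e'].
  + by case: nu; rewrite e'; exact: connected_in_refl.
  + by case: nv; rewrite e'; exact: connected_in_refl.
- by split; [rewrite support_add_edge tS|exact: connected_add_edge].
Qed.

Lemma comps_add_edge_away :
  [fset C in Defs.comps G' | ~~ touches u v C] = [fset C in Defs.comps G | ~~ touches u v C].
Proof.
apply/fsetP => C; rewrite !in_fset_filter; apply/andP/andP => -[/compsP[w wS ->] hC].
- case/norP: (hC) => /(comp_notin_disconnected wS) nu /(comp_notin_disconnected wS) nv.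
  have {}nu : ~ connected_in G w u by move/connected_add_edge; apply: nu.
  have {}nv : ~ connected_in G w v by move/connected_add_edge; apply: nv.
  rewrite (comp_add_edge_away nu nv) in hC *; split=> //; apply/compsP; exists w => //.
  move: wS; rewrite support_add_edge => /or3P[//|/eqP e|/eqP e]; exfalso;
    [apply: nu|apply: nv]; rewrite e; exact: connected_in_refl.
- case/norP: (hC) => /(comp_notin_disconnected wS) nu /(comp_notin_disconnected wS) nv.
  rewrite -(comp_add_edge_away nu nv) in hC *; split=> //; apply/compsP; exists w => //.
  by rewrite support_add_edge wS.
Qed.

Lemma f_away_add_edge (R : realType) W : (u, v) \notin cg_edges G ->
  red_bipartition G' W -> f_away R G' u v = f_away R G u v.
Proof.
move=> he hW'; have [hW _] := (red_bipartition_add_edge _ _ he).1 hW'.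
rewrite /f_away comps_add_edge_away; apply: eq_fbigr => C.
rewrite in_fset_filter => /andP[/compsP[w wS ->] hC] _.
case/norP: (hC) => /(comp_notin_disconnected wS) nu /(comp_notin_disconnected wS) nv.
have /norP[uC _] := hC.
have wS' : w \in Defs.support G' by rewrite support_add_edge wS.
rewrite -{1}(comp_add_edge_away nu nv) (f_comp_bipartition R hW' wS').
rewrite (f_comp_bipartition R hW wS) (comp_add_edge_away nu nv) !pot_add_edge //.
by rewrite !(in_fset_filter (Defs.comp G w)) (negbTE uC) /= !addr0.
Qed.

Lemma pot_add_bridge (R : realType) (P : pred nat) :
  (u, v) \notin cg_edges G -> ~ connected_in G u v ->
  pot R G' [fset z in Defs.comp G' u | P z] =
  pot R G [fset z in vcomp G u | P z] + pot R G [fset z in vcomp G v | P z] + (P u && P v)%:R.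
Proof.
move=> he nuv; set A := [fset z in vcomp G u | P z]; set B := [fset z in vcomp G v | P z].
have -> : [fset z in Defs.comp G' u | P z] = A `|` B.
  apply/fsetP => z; rewrite comp_add_edge in_fsetU (in_fset_filter (_ `|` _)) in_fsetU.
  by rewrite (in_fset_filter (vcomp G u)) (in_fset_filter (vcomp G v)) andb_orl.
rewrite pot_add_edge // pot_fsetU; last first.
  move=> a b; rewrite !in_fset_filter => /andP[/mem_vcompP au _] /andP[/mem_vcompP bv _] ab.
  by apply: nuv; apply: connected_in_trans (connected_in_trans (connected_in_sym au) ab) bv.
congr (_ + _%:R); rewrite /= !in_fsetU !in_fset_filter !fset1U1 /=.
by case: (P u); case: (P v); rewrite ?orbT ?andbF.
Qed.

Lemma f_add_bridgeE (R : realType) W :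
  (u, v) \notin cg_edges G -> ~ connected_in G u v -> red_bipartition G' W ->
  f R G' = fsides
    (pot R G [fset z in vcomp G u | W z] + pot R G [fset z in vcomp G v | W z] + (W u && W v)%:R)
    (pot R G [fset z in vcomp G u | ~~ W z] + pot R G [fset z in vcomp G v | ~~ W z] +
       (~~ W u && ~~ W v)%:R)
  + f_away R G u v.
Proof.
move=> he nuv hW'.
have neq : u != v by apply/eqP => e; apply: nuv; rewrite e; exact: connected_in_refl.
have uS : u \in Defs.support G' by rewrite support_add_edge eqxx orbT.
rewrite (f_connected R neq connected_new_edge) (f_away_add_edge R he hW').
by rewrite (f_comp_bipartition R hW' uS) !pot_add_bridge.
Qed.

End AddEdge.

Lemma bool_ler01 (R : realType) (b : bool) : 0 <= (b%:R : R) <= 1.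
Proof. by case: b; rewrite ?lexx ?ler01. Qed.

Lemma add_chord_le (R : realType) G u v W :
  (u, v) \notin cg_edges G -> u != v -> connected_in G u v -> red_bipartition G W ->
  let G' := add_edge G (u, v) (W u (+) W v) in
  red_bipartition G' W /\ f R G' <= f R G + phi R + 1.
Proof.
move=> he neq huv hW G'.
have hW' : red_bipartition G' W by apply/red_bipartition_add_edge.
have [e|uS] := connected_in_support huv; first by rewrite e eqxx in neq.
have [e|vS] := connected_in_support (connected_in_sym huv); first by rewrite e eqxx in neq.
have uS' : u \in Defs.support G' by rewrite support_add_edge uS.
have compG' : Defs.comp G' u = Defs.comp G u.
  by rewrite comp_add_edge !vcomp_support // (comp_connected huv) fsetUid.
split=> //; rewrite (f_connected R neq (connected_add_edge u v _ huv)) (f_away_add_edge R he hW').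
rewrite (f_comp_bipartition R hW' uS') compG' !pot_add_edge //.
rewrite (f_connected R neq huv) (f_comp_bipartition R hW uS).
move: (_ && _) (_ && _) => b1 b2.
by have := fsides_shift_le (pot R G [fset z in Defs.comp G u | W z])
  (pot R G [fset z in Defs.comp G u | ~~ W z]) (bool_ler01 R b2) (bool_ler01 R b1); lra.
Qed.

Lemma disconnected_red_bipartition G u v : ~ connected_in G u v -> red_bipartite G ->
  exists2 W, red_bipartition G W & W u && W v.
Proof.
move=> nuv [W0 hW0].
pose P z := if bool_of (connected_in G z v) then ~~ W0 v else ~~ W0 u.
exists (fun z => W0 z (+) P z).
  by apply: red_bipartition_flip => // x hx; rewrite /P (bool_of_connected_edge v hx).
rewrite /P; case: bool_ofP => [/nuv //|_]; case: bool_ofP => [_|[]].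
  by rewrite !addbN !addbb.
exact: connected_in_refl.
Qed.

Section Bridge.
Variables (R : realType) (G : cgraph) (u v : nat) (W : nat -> bool).
Hypotheses (he : (u, v) \notin cg_edges G) (nuv : ~ connected_in G u v).
Hypotheses (hW : red_bipartition G W) (Wu : W u) (Wv : W v).
Let p := pot R G [fset z in vcomp G u | W z].
Let q := pot R G [fset z in vcomp G u | ~~ W z].
Let r := pot R G [fset z in vcomp G v | W z].
Let s := pot R G [fset z in vcomp G v | ~~ W z].

Lemma f_add_bridge_blue : red_bipartite (add_edge G (u, v) blue) /\
  f R (add_edge G (u, v) blue) = fsides (p + r + 1) (q + s) + f_away R G u v.
Proof.
have hb : red_bipartition (add_edge G (u, v) blue) W.
  by apply/red_bipartition_add_edge => //; rewrite Wu Wv.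
by split; [exists W | rewrite (f_add_bridgeE R he nuv hb) Wu Wv /= addr0].
Qed.

Lemma f_add_bridge_red : red_bipartite (add_edge G (u, v) red) /\
  f R (add_edge G (u, v) red) = fsides (p + s) (q + r) + f_away R G u v.
Proof.
pose Wr z := W z (+) bool_of (connected_in G z v).
have Wr_u z : z \in vcomp G u -> Wr z = W z.
  move=> /mem_vcompP zu; rewrite /Wr; case: bool_ofP => [zv|]; last by rewrite addbF.
  by case: nuv; exact: connected_in_trans (connected_in_sym zu) zv.
have Wr_v z : z \in vcomp G v -> Wr z = ~~ W z.
  by move=> /mem_vcompP zv; rewrite /Wr; case: bool_ofP => [_|[]] //; exact: addbT.
have Wru : Wr u by rewrite Wr_u ?Wu // fset1U1.
have Wrv : Wr v = false by rewrite Wr_v ?Wv // fset1U1.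
have hr : red_bipartition (add_edge G (u, v) red) Wr.
  apply/red_bipartition_add_edge => //; rewrite Wru Wrv; split=> //.
  by apply: red_bipartition_flip => // x hx; exact: bool_of_connected_edge.
split; first by exists Wr.
rewrite (f_add_bridgeE R he nuv hr) Wru Wrv /= !addr0 /p /q /r /s.
congr (fsides (pot R G _ + pot R G _) (pot R G _ + pot R G _) + _); apply: eq_fset_filter.
- by move=> z /Wr_u ->.
- by move=> z /Wr_v ->.
- by move=> z /Wr_u ->.
- by move=> z /Wr_v ->; rewrite negbK.
Qed.

Lemma add_bridge_le : cg_wf G ->
  exists c, red_bipartite (add_edge G (u, v) c) /\
            f R (add_edge G (u, v) c) <= f R G + phi R + 1.
Proof.
move=> wf.
have iso t : W t -> t \notin Defs.support G ->
    pot R G [fset z in vcomp G t | W z] = phi R /\ pot R G [fset z in vcomp G t | ~~ W z] = 0.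
  by move=> Wt tS; rewrite !pot_vcomp_isolated // Wt.
have := fsides_merge_choice (iso u Wu) (iso v Wv).
rewrite (f_disconnected R nuv) !(f_at_bipartition R _ hW) -/p -/q -/r -/s.
(* lra does not accept the conditionals as atoms *)
move: (if _ then _ else _) (if _ then _ else _) => Fu Fv.
have [bb fb] := f_add_bridge_blue; have [br fr] := f_add_bridge_red.
by case=> hle; [exists blue; rewrite fb | exists red; rewrite fr]; split=> //; lra.
Qed.

End Bridge.

Theorem lemma1 (R : realType) (G : cgraph) (e : nat * nat) :
  cg_wf G -> red_bipartite G ->
  (e.1 < e.2)%N -> e \notin cg_edges G ->
  exists c : bool,
    red_bipartite (add_edge G e c) /\
    f R (add_edge G e c) <= f R G + phi R + 1.
Proof.
case: e => u v /= wf hG luv he.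
have neq : u != v by rewrite neq_ltn luv.
case: (bool_ofP (connected_in G u v)) => [huv|nuv].
  have [W hW] := hG; have [hW' hle] := add_chord_le R he neq huv hW.
  by exists (W u (+) W v); split; first exists W.
have [W hW /andP[Wu Wv]] := disconnected_red_bipartition nuv hG.
exact: add_bridge_le he nuv hW Wu Wv wf.
Qed.
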